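(* Let $V$ be a left vector space over a field $K$ (not necessarily commutative, of arbitrary finite or infinite dimension) such that $\mathcal G\neq\emptyset$. For all $P,Q\in\mathcal G$ the following are equivalent: (a) $P$ and $Q$ are adjacent. (b) There exists $R\in\mathcal G$ with $R\neq P$, $R\neq Q$, such that for every $X\in\mathcal G$: if $X\oplus R=V$ then $X\oplus P=V$ or $X\oplus Q=V$.
   Context: Throughout, $K$ is a (not necessarily commutative) field, i.e. a division ring, and $V$ is a left vector space over $K$ of arbitrary (possibly infinite) dimension. $\mathcal G$ denotes the set of all subspaces $X\le V$ such that $X$ is isomorphic to the quotient space $V/X$ (equivalently, $X$ is isomorphic to one, hence all, of its complements in $V$). Two elements $X,Y\in\mathcal G$ are called distant if they are complementary, i.e. $X\oplus Y=V$ ($X\cap Y=0$ and $X+Y=V$). Two elements $X,Y\in\mathcal G$ are called adjacent (written $X\sim Y$) if $\dim((X+Y)/X)=\dim((X+Y)/Y)=1$. *)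

From HB Require Import structures.
From mathcomp Require Import all_boot all_order all_algebra.
Set Implicit Arguments. Unset Strict Implicit. Unset Printing Implicit Defensive.
Import GRing.Theory.
Local Open Scope ring_scope.

Definition is_division_ring (K : unitRingType) : Prop :=
  forall x : K, x != 0 -> x \is a GRing.unit.

Section Subspaces.
Variables (K : unitRingType) (V : lmodType K).

Definition is_subspace (X : V -> Prop) : Prop :=
  X 0 /\ (forall u w, X u -> X w -> X (u + w)) /\
  (forall (a : K) u, X u -> X (a *: u)).

Definition sp_eq (X Y : V -> Prop) : Prop := forall v, X v <-> Y v.

Definition sp_sum (X Y : V -> Prop) : V -> Prop :=
  fun v => exists x y, X x /\ Y y /\ v = x + y.

Definition is_linear (f : V -> V) : Prop :=
  forall (a : K) u w, f (a *: u + w) = a *: f u + f w.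

(* X is isomorphic to V/X: there is a linear map V -> V with kernel exactly X
   and image exactly X (first isomorphism theorem: V/ker f ~ im f). *)
Definition iso_quot (X : V -> Prop) : Prop :=
  exists f : V -> V, is_linear f /\
    (forall v, f v = 0 <-> X v) /\
    (forall x, X x <-> exists v, f v = x).

Definition inG (X : V -> Prop) : Prop := is_subspace X /\ iso_quot X.

Definition distant (X Y : V -> Prop) : Prop :=
  (forall v, X v -> Y v -> v = 0) /\ (forall v, sp_sum X Y v).

(* dim((X+Y)/X) = 1: the quotient (X+Y)/X is spanned by the class of one
   vector v in X+Y not in X. *)
Definition codim1_in_sum (X Y : V -> Prop) : Prop :=
  exists v, sp_sum X Y v /\ ~ X v /\
    forall w, sp_sum X Y w -> exists k : K, X (w - k *: v).

Definition adjacent (X Y : V -> Prop) : Prop :=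
  codim1_in_sum X Y /\ codim1_in_sum Y X.

End Subspaces.

(* (a) => (b): if P and Q are adjacent, pick q in Q \ P and p in P \ Q, so that
   P + Q = P + Kq = Q + Kp, and a linear functional lam vanishing on Q with lam p = 1.
   The transvection v |-> v + lam(v) q fixes Q pointwise and maps P onto a third
   subspace R in G with P + Q = R + Kq.  A complement X of R splits q as x + r, and
   since x cannot lie in both P and Q, X is a complement of P or of Q.
   (b) => (a): a subspace meeting R trivially extends (Zorn) to a complement of R,
   and complements of R lie in G.  Testing the hypothesis on complements through
   suitable vectors gives P /\ Q <= R and, for u in P \ R and w in Q \ R, some c with
   u + c w in R; hence P <= R + Ku0 and Q <= R + Kw0.  A common complement of R and P
   then forces Q /\ R <= P, so P + Q = P + Kw0. *)

From HB Require Import structures.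
From mathcomp Require Import all_boot all_order all_algebra.
From mathcomp Require Import boolp classical_sets.
Set Implicit Arguments.
Unset Strict Implicit.
Import GRing.Theory.
Local Open Scope ring_scope.

Section Subspaces.
Variables (K : unitRingType) (V : lmodType K).
Implicit Types (A B P Q R S T X Y : V -> Prop) (a b c k : K) (u v w x y z : V).

Lemma subspace0 X : is_subspace X -> X 0.
Proof. by case. Qed.

Lemma subspaceD X u w : is_subspace X -> X u -> X w -> X (u + w).
Proof. by case=> _ [+ _]; apply. Qed.

Lemma subspaceZ X a u : is_subspace X -> X u -> X (a *: u).
Proof. by case=> _ [_]; apply. Qed.

Lemma subspaceN X u : is_subspace X -> X u -> X (- u).
Proof. by move=> sX Xu; rewrite -scaleN1r; apply: subspaceZ. Qed.

Lemma subspaceB X u w : is_subspace X -> X u -> X w -> X (u - w).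
Proof. by move=> sX Xu Xw; apply: subspaceD => //; apply: subspaceN. Qed.

Lemma sp_sum_subspace X Y : is_subspace X -> is_subspace Y ->
  is_subspace (sp_sum X Y).
Proof.
move=> sX sY; split; last split.
- exists 0, 0; rewrite addr0.
  by split; [exact: subspace0 sX|split=> //; exact: subspace0 sY].
- move=> _ _ [x1 [y1 [X1 [Y1 ->]]]] [x2 [y2 [X2 [Y2 ->]]]].
  exists (x1 + x2), (y1 + y2); rewrite addrACA.
  by split; [apply: subspaceD|split; first apply: subspaceD].
- move=> a _ [x [y [Xx [Yy ->]]]]; exists (a *: x), (a *: y); rewrite scalerDr.
  by split; [apply: subspaceZ|split; first apply: subspaceZ].
Qed.

Lemma sp_suml X Y x : is_subspace Y -> X x -> sp_sum X Y x.
Proof.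
by move=> sY Xx; exists x, 0; rewrite addr0; split=> //; split=> //; exact: subspace0 sY.
Qed.

Lemma sp_sumr X Y y : is_subspace X -> Y y -> sp_sum X Y y.
Proof. by move=> sX Yy; exists 0, y; rewrite add0r; split=> //; exact: subspace0 sX. Qed.

Lemma sp_sumC X Y v : sp_sum X Y v -> sp_sum Y X v.
Proof. by move=> [x [y [Xx [Yy ->]]]]; exists y, x; rewrite addrC. Qed.

Definition line z : V -> Prop := fun v => exists a, v = a *: z.

Lemma line_subspace z : is_subspace (line z).
Proof.
split; first by exists 0; rewrite scale0r.
split; first by move=> _ _ [a ->] [b ->]; exists (a + b); rewrite scalerDl.
by move=> c _ [a ->]; exists (c * a); rewrite scalerA.
Qed.

Lemma line_id z : line z z.
Proof. by exists 1; rewrite scale1r. Qed.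

Lemma sp_sum_lineP X z w : sp_sum X (line z) w <-> exists k, X (w - k *: z).
Proof.
split; first by move=> [x [_ [Xx [[k ->] ->]]]]; exists k; rewrite addrK.
move=> [k Xw]; exists (w - k *: z), (k *: z).
by rewrite subrK; split=> //; split=> //; exists k.
Qed.

Section LinearMaps.
Variable f : V -> V.
Hypothesis lin_f : is_linear f.

Lemma is_linear0 : f 0 = 0.
Proof.
have := lin_f 1 0 0; rewrite scaler0 addr0 scale1r => f00.
by apply: (addrI (f 0)); rewrite addr0 -f00.
Qed.

Lemma is_linearD u w : f (u + w) = f u + f w.
Proof. by have := lin_f 1 u w; rewrite !scale1r. Qed.

Lemma is_linearZ a u : f (a *: u) = a *: f u.
Proof. by have := lin_f a u 0; rewrite !addr0 is_linear0 addr0. Qed.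

Lemma is_linearB u w : f (u - w) = f u - f w.
Proof. by rewrite is_linearD -scaleN1r is_linearZ scaleN1r. Qed.

End LinearMaps.

Lemma linear_of_graph (W : lmodType K) (G : V -> W -> Prop) :
  (forall v, exists t, G v t) ->
  (forall v t1 t2, G v t1 -> G v t2 -> t1 = t2) ->
  (forall a u v t1 t2, G u t1 -> G v t2 -> G (a *: u + v) (a *: t1 + t2)) ->
  exists f : V -> W, (forall a u v, f (a *: u + v) = a *: f u + f v) /\
                     (forall v t, f v = t <-> G v t).
Proof.
move=> Gex Guniq Glin; pose f v := sval (cid (Gex v)).
have Gf v : G v (f v) by rewrite /f; case: cid.
have fP v t : f v = t <-> G v t by split=> [<-|]; [apply: Gf|apply: Guniq].
by exists f; split=> // a u v; apply/fP/Glin.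
Qed.

Lemma distant_subset X A R : is_subspace R -> (forall v, A v -> R v) ->
  distant X R -> distant X A -> forall v, R v -> A v.
Proof.
move=> sR AR [XR0 _] [_ XA] v Rv; have [x [a [Xx [Aa eva]]]] := XA v.
have x0 : x = 0.
  apply: XR0 => //; have -> : x = v - a by rewrite eva addrK.
  by apply: (subspaceB sR) => //; apply: AR.
by rewrite eva x0 add0r.
Qed.

Lemma complement_projection X R :
  is_subspace X -> is_subspace R -> distant X R ->
  exists pi : V -> V, is_linear pi /\ forall v r, pi v = r <-> R r /\ X (v - r).
Proof.
move=> sX sR [XR0 XR]; apply: linear_of_graph => [v|v r1 r2 [R1 X1] [R2 X2]|].
- by have [x [r [Xx [Rr ->]]]] := XR v; exists r; rewrite addrK.
- apply/eqP; rewrite eq_sym -subr_eq0; apply/eqP; apply: XR0; last exact: subspaceB.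
  by have := subspaceB sX X1 X2; rewrite opprB addrC subrKA.
- move=> a u v r1 r2 [R1 X1] [R2 X2].
  split; first by apply: subspaceD => //; apply: subspaceZ.
  rewrite opprD addrACA -scalerBr.
  by apply: subspaceD => //; apply: subspaceZ.
Qed.

(* If f has kernel and image R, then f maps X isomorphically onto R; following the
   projection onto R along X by the inverse of this isomorphism gives a map with
   kernel and image X. *)
Lemma complement_inG R X : inG R -> is_subspace X -> distant X R -> inG X.
Proof.
move=> [sR [f [lin_f [ker_f im_f]]]] sX dXR; split=> //.
have [pi [lin_pi piP]] := complement_projection sX sR dXR.
have [XR0 XR] := dXR.
have fR r : R r -> f r = 0 by move/ker_f.
have f_inj x1 x2 : X x1 -> X x2 -> f x1 = f x2 -> x1 = x2.
  move=> X1 X2 f12; apply/eqP; rewrite -subr_eq0; apply/eqP.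
  by apply: XR0; [apply: subspaceB|apply/ker_f; rewrite is_linearB // f12 subrr].
have [g [lin_g gP]] : exists g : V -> V, is_linear g /\
    forall v x, g v = x <-> X x /\ f x = pi v.
  apply: linear_of_graph => [v|v x1 x2 [X1 f1] [X2 f2]|a u v x y [Xx fx] [Xy fy]].
  - have [u fu] : exists u, f u = pi v.
      by apply/im_f; have [] := (piP v (pi v)).1 erefl.
    have [x [r [Xx [Rr uxr]]]] := XR u.
    by exists x; split=> //; rewrite -fu uxr (is_linearD lin_f) (fR r Rr) addr0.
  - by apply: f_inj => //; rewrite f1 f2.
  - split; first by apply: subspaceD => //; apply: subspaceZ.
    by rewrite lin_f lin_pi fx fy.
exists g; split=> //; split=> [v|x].
- rewrite gP is_linear0 //; split=> [[_ /esym/piP[]]|Xv].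
    by rewrite subr0.
  split; first exact: subspace0.
  by apply/esym/piP; rewrite subr0; split=> //; apply: subspace0.
- split=> [Xx|[v <-]]; last by have [] := (gP v (g v)).1 erefl.
  exists (f x); apply/gP; split=> //; apply/esym/piP; rewrite subrr.
  by split; [apply/im_f; exists x|apply: subspace0].
Qed.

Lemma inG_comp_automorphism P s t : inG P -> is_linear s -> is_linear t ->
  cancel s t -> cancel t s -> inG (fun v => P (s v)).
Proof.
move=> [sP [f [lin_f [ker_f im_f]]]] lin_s lin_t sK tK; split.
  split; first by rewrite is_linear0 //; apply: subspace0.
  split=> [u v Pu Pv|a u Pu]; first by rewrite is_linearD //; apply: subspaceD.
  by rewrite is_linearZ //; apply: subspaceZ.
exists (fun v => t (f (s v))); split=> [a u v|]; first by rewrite lin_s lin_f lin_t.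
split=> [v|x].
  rewrite -ker_f; split=> [tfsv0|->]; last exact: is_linear0.
  by apply: (can_inj tK); rewrite tfsv0 is_linear0.
rewrite im_f; split=> [[w fw]|[v <-]]; last by exists (s v); rewrite tK.
by exists (t w); rewrite tK fw sK.
Qed.

Definition is_functional (lam : V -> K) : Prop :=
  forall a u v, lam (a *: u + v) = a * lam u + lam v.

Lemma is_functional_shift lam q c v : is_functional lam -> lam q = 0 ->
  lam (v + c *: q) = lam v.
Proof. by move=> lin_lam lam_q; rewrite addrC lin_lam lam_q mulr0 add0r. Qed.

Lemma transvection_inG P lam q : inG P -> is_functional lam -> lam q = 0 ->
  inG (fun v => P (v - lam v *: q)).
Proof.
move=> GP lin_lam lam_q; have lam_shift := is_functional_shift _ _ lin_lam lam_q.
apply: (inG_comp_automorphism (t := fun v => v + lam v *: q)) => //.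
- by move=> a u v; rewrite lin_lam scalerDl -scalerA scalerBr opprD addrACA.
- by move=> a u v; rewrite lin_lam scalerDl -scalerA scalerDr addrACA.
- by move=> v; rewrite -scaleNr lam_shift scaleNr subrK.
- by move=> v; rewrite lam_shift addrK.
Qed.

Section DivisionRing.
Hypothesis HK : is_division_ring K.

Lemma divring_scalerK a v : a != 0 -> a^-1 *: (a *: v) = v.
Proof. by move=> /HK ua; rewrite scalerA mulVr // scale1r. Qed.

Lemma subspaceZ_div X a v : is_subspace X -> a != 0 -> X (a *: v) -> X v.
Proof. by move=> sX a0 Xav; rewrite -(divring_scalerK v a0); apply: subspaceZ. Qed.

Lemma line_disjoint R u : is_subspace R -> ~ R u ->
  forall v, line u v -> R v -> v = 0.
Proof.
move=> sR nRu _ [a ->] Rau.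
have [-> | a0] := eqVneq a 0; first by rewrite scale0r.
by case: nRu; apply: subspaceZ_div Rau.
Qed.

Definition disjoint_extension R S T :=
  is_subspace T /\ (forall v, S v -> T v) /\ (forall v, T v -> R v -> v = 0).

Lemma bigcup_disjoint_extension R S (F : set (set V)) :
  (forall T, F T -> T = set0 \/ disjoint_extension R S T) ->
  total_on F subset ->
  (exists2 T, F T & disjoint_extension R S T) ->
  disjoint_extension R S (\bigcup_(T in F) T)%classic.
Proof.
move=> F0E Ftot [T0 FT0 [sT0 [ST0 _]]].
have FE T u : F T -> T u -> disjoint_extension R S T.
  by move=> /F0E [-> //|].
split; last split.
- split; first by exists T0 => //; apply: subspace0.
  split.
    move=> u v [T1 F1 T1u] [T2 F2 T2v].
    have [sT1 _] := FE _ _ F1 T1u; have [sT2 _] := FE _ _ F2 T2v.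
    case: (Ftot _ _ F1 F2) => [T12|T21]; [exists T2|exists T1] => //.
      by apply: subspaceD => //; apply: T12.
    by apply: subspaceD => //; apply: T21.
  move=> a u [T1 F1 T1u].
  by have [sT1 _] := FE _ _ F1 T1u; exists T1 => //; apply: subspaceZ.
- by move=> v Sv; exists T0 => //; apply: ST0.
- by move=> v [T1 F1 T1v]; have [_ [_]] := FE _ _ F1 T1v; apply.
Qed.

Lemma disjoint_extension_line R S T v : is_subspace R ->
  disjoint_extension R S T -> ~ sp_sum T R v ->
  disjoint_extension R S (sp_sum T (line v)).
Proof.
move=> sR [sT [ST TR0]] nTRv; split; last split.
- by apply: sp_sum_subspace => //; apply: line_subspace.
- by move=> u Su; apply: sp_suml; [exact: line_subspace|exact: ST].
move=> _ [t [_ [Tt [[a ->] ->]]]] Rtav.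
have [a0 | a0] := eqVneq a 0.
  by move: Rtav; rewrite a0 scale0r addr0; apply: TR0.
case: nTRv; exists (- (a^-1 *: t)), (a^-1 *: (t + a *: v)).
split; first by apply: subspaceN => //; apply: subspaceZ.
by split; [apply: subspaceZ|rewrite scalerDr divring_scalerK // addKr].
Qed.

Lemma complement_extension R S : is_subspace R -> is_subspace S ->
  (forall v, S v -> R v -> v = 0) ->
  exists T, is_subspace T /\ (forall v, S v -> T v) /\ distant T R.
Proof.
move=> sR sS SR0.
(* set0 is admitted by the Zorn predicate because it is the union of the empty chain. *)
have [F F0E Ftot|T [[T0|ET] Tmax]] :=
    @Zorn_bigcup V (fun T => T = set0 \/ disjoint_extension R S T).
- have [FT|noT] := pselect (exists2 T, F T & disjoint_extension R S T).
    by right; apply: bigcup_disjoint_extension.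
  left; apply/seteqP; split=> // v [T FT Tv]; case: (F0E _ FT) => [T0|ET].
    by rewrite T0 in Tv.
  by case: noT; exists T.
- case: (Tmax S); last by right; split; last split.
  rewrite T0; split=> // /(_ 0); apply; exact: subspace0 sS.
- have [sT [ST TR0]] := ET; exists T; split=> //; split=> //; split=> // v.
  apply: contrapT => nTRv; apply: (Tmax (sp_sum T (line v))).
    split; first by move=> t Tt; apply: sp_suml => //; apply: line_subspace.
    move=> vT; apply: nTRv; apply: sp_suml => //; apply: vT.
    by apply: sp_sumr; [exact: sT|exact: line_id].
  by right; apply: disjoint_extension_line.
Qed.

Lemma linear_functional R p : is_subspace R -> ~ R p ->
  exists lam : V -> K,
    [/\ is_functional lam, forall v, R v -> lam v = 0 & lam p = 1].
Proof.
move=> sR nRp.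
have p0 : p != 0 by apply: contra_notN nRp => /eqP ->; apply: subspace0.
have [H [sH [RH [Hp0 Hp]]]] := complement_extension (line_subspace p) sR
  (fun v Rv pv => line_disjoint sR nRp pv Rv).
have [lam [lin_lam lamP]] : exists lam : V -> K^o,
    (forall a u v, lam (a *: u + v) = a *: lam u + lam v) /\
    forall v k, lam v = k <-> H (v - k *: p).
  apply: linear_of_graph => [v|v a b Ha Hb|c u v a b Ha Hb].
  - exact/sp_sum_lineP/Hp.
  - have ba_p0 : (b - a) *: p = 0.
      apply: Hp0; last by exists (b - a).
      by have := subspaceB sH Ha Hb; rewrite opprB addrC subrKA scalerBl.
    apply/eqP; rewrite eq_sym -subr_eq0; apply: contraTT p0 => ba0.
    by rewrite negbK -(divring_scalerK p ba0) ba_p0 scaler0.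
  - have -> : c *: u + v - (c * a + b) *: p = c *: (u - a *: p) + (v - b *: p).
      by rewrite scalerDl -scalerA scalerBr opprD addrACA.
    by apply: subspaceD => //; apply: subspaceZ.
exists lam; split=> // [v Rv|]; apply/lamP.
  by rewrite scale0r subr0; apply: RH.
by rewrite scale1r subrr; apply: subspace0.
Qed.

Lemma distant_exchange R A X q z x :
  is_subspace R -> is_subspace A -> is_subspace X ->
  (forall v, A v -> sp_sum R (line q) v) ->
  (forall v, R v -> sp_sum A (line z) v) ->
  sp_sum A (line z) q -> distant X R -> X x -> R (q - x) -> ~ A x -> distant X A.
Proof.
move=> sR sA sX AR RA Aq [XR0 XR] Xx Rqx nAx.
have sAz := sp_sum_subspace sA (line_subspace z).
have sXA := sp_sum_subspace sX sA.
have /sp_sum_lineP [d Axz] : sp_sum A (line z) x.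
  by rewrite -[x](subKr q); apply: subspaceB => //; apply: RA.
split=> [y Xy Ay|v].
  have /sp_sum_lineP [c Ryq] := AR y Ay.
  have ycx0 : y - c *: x = 0.
    apply: XR0; first by apply: subspaceB => //; apply: subspaceZ.
    have -> : y - c *: x = (y - c *: q) + c *: (q - x).
      by rewrite scalerBr addrA subrK.
    by apply: subspaceD => //; apply: subspaceZ.
  have yE : y = c *: x by apply/eqP; rewrite -subr_eq0 ycx0.
  rewrite yE in Ay *.
  have [-> | c0] := eqVneq c 0; first by rewrite scale0r.
  by case: nAx; apply: subspaceZ_div c0 _.
have d0 : d != 0.
  by apply: contra_notN nAx => /eqP d0; move: Axz; rewrite d0 scale0r subr0.
have XAz : sp_sum X A z.
  apply: subspaceZ_div d0 _ => //; rewrite -[d *: z](subKr x).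
  by apply: subspaceB => //; [apply: sp_suml|apply: sp_sumr].
have [x0 [r0 [Xx0 [Rr0 ->]]]] := XR v.
have [a [_ [Aa [[k ->] ->]]]] := RA r0 Rr0.
rewrite addrA; apply: subspaceD => //; last exact: subspaceZ.
by apply: subspaceD => //; [apply: sp_suml|apply: sp_sumr].
Qed.


Definition separates R P Q : Prop :=
  forall X : V -> Prop, inG X -> distant X R -> distant X P \/ distant X Q.

Lemma codim1_in_sum_witness A B : is_subspace A -> is_subspace B ->
  codim1_in_sum A B ->
  exists z, [/\ B z, ~ A z & forall w, sp_sum A B w -> sp_sum A (line z) w].
Proof.
move=> sA sB [v [[a [z [Aa [Bz ->]]]] [nAv spanv]]]; exists z; split=> //.
  by apply: contra_not nAv => Az; apply: subspaceD.
move=> w /spanv [k Awk]; apply/sp_sum_lineP; exists k.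
have -> : w - k *: z = (w - k *: (a + z)) + k *: a.
  by rewrite scalerDr opprD addrA addrAC subrK.
by apply: subspaceD => //; apply: subspaceZ.
Qed.

Section Transvected.
Variables (P Q : V -> Prop) (p q : V) (lam : V -> K).
Hypotheses (GP : inG P) (sQ : is_subspace Q).
Hypotheses (Pp : P p) (Qq : Q q) (nPq : ~ P q).
Hypothesis PQ_Pq : forall w, sp_sum P Q w -> sp_sum P (line q) w.
Hypothesis PQ_Qp : forall w, sp_sum P Q w -> sp_sum Q (line p) w.
Hypotheses (lin_lam : is_functional lam) (lamQ : forall v, Q v -> lam v = 0).
Hypothesis lam_p : lam p = 1.

(* R is the image of P under the transvection v |-> v + lam v *: q. *)
Let R v := P (v - lam v *: q).
Let sP : is_subspace P := GP.1.

Lemma transvected_sub_sum v : R v -> sp_sum P Q v.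
Proof.
move=> Rv; exists (v - lam v *: q), (lam v *: q).
by rewrite subrK; split=> //; split=> //; apply: subspaceZ.
Qed.

Lemma sum_sub_transvected_line w : sp_sum P Q w -> sp_sum R (line q) w.
Proof.
move=> /PQ_Pq /sp_sum_lineP [k Pwk]; apply/sp_sum_lineP; exists (k - lam w).
rewrite /R -scaleNr (is_functional_shift _ _ lin_lam (lamQ Qq)) scaleNr.
by rewrite scalerBl opprB addrA addrAC addrK.
Qed.

Lemma transvected_cap v : P v -> Q v -> R v.
Proof. by move=> Pv Qv; rewrite /R lamQ // scale0r subr0. Qed.

Lemma transvected_pq : R (p + q).
Proof.
have := lin_lam 1 p q; rewrite scale1r mul1r lam_p (lamQ Qq) addr0 => lam_pq.
by rewrite /R lam_pq scale1r addrK.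
Qed.

Lemma transvected_separates : separates R P Q.
Proof.
move=> X [sX _] dXR; have [sR _] := transvection_inG GP lin_lam (lamQ Qq).
have [x [r [Xx [Rr qxr]]]] := dXR.2 q.
have Rqx : R (q - x) by rewrite qxr addrC addKr.
have R_PQ v : R v -> sp_sum Q (line p) v by move=> /transvected_sub_sum/PQ_Qp.
have R_Pq v : R v -> sp_sum P (line q) v by move=> /transvected_sub_sum/PQ_Pq.
have [nPx | nQx] : ~ P x \/ ~ Q x.
  apply: contrapT => /not_orP [/contrapT Px /contrapT Qx].
  have x0 : x = 0 by apply: dXR.1 => //; apply: transvected_cap.
  by move: Rqx; rewrite x0 subr0 /R lamQ // scale0r subr0.
- left; apply: (distant_exchange (R := R) (q := q) (z := q) (x := x)) => //.
  + by move=> v Pv; apply: sum_sub_transvected_line; apply: sp_suml.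
  + by apply: sp_sumr => //; exact: line_id.
- right; apply: (distant_exchange (R := R) (q := q) (z := p) (x := x)) => //.
  + by move=> v Qv; apply: sum_sub_transvected_line; apply: sp_sumr.
  + by apply: PQ_Qp; apply: sp_sumr.
Qed.

End Transvected.

Lemma adjacent_separated P Q : inG P -> inG Q -> adjacent P Q ->
  exists R, [/\ inG R, ~ sp_eq R P, ~ sp_eq R Q & separates R P Q].
Proof.
move=> GP [sQ _] [PQ QP]; have sP := GP.1.
have [q [Qq nPq PQ_Pq]] := codim1_in_sum_witness sP sQ PQ.
have [p [Pp nQp QP_Qp]] := codim1_in_sum_witness sQ sP QP.
have PQ_Qp w : sp_sum P Q w -> sp_sum Q (line p) w by move/sp_sumC/QP_Qp.
have [lam [lin_lam lamQ lam_p]] := linear_functional sQ nQp.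
have Rpq := transvected_pq Pp Qq lin_lam lamQ lam_p.
exists (fun v => P (v - lam v *: q)); split.
- exact: transvection_inG GP lin_lam (lamQ q Qq).
- move=> /(_ (p + q)) [/(_ Rpq) Ppq _].
  by apply: nPq; rewrite -(addKr p q) addrC; apply: (subspaceB sP).
- move=> /(_ (p + q)) [/(_ Rpq) Qpq _].
  by apply: nQp; rewrite -(addrK q p); apply: (subspaceB sQ).
- exact: (transvected_separates GP sQ Qq nPq PQ_Pq PQ_Qp lin_lam lamQ).
Qed.

Lemma complement_inG_extension R S : inG R -> is_subspace S ->
  (forall v, S v -> R v -> v = 0) ->
  exists X, [/\ inG X, forall v, S v -> X v & distant X R].
Proof.
move=> GR sS SR0; have [X [sX [SX dXR]]] := complement_extension GR.1 sS SR0.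
by exists X; split=> //; apply: complement_inG GR sX dXR.
Qed.

Lemma complement_through R u : inG R -> ~ R u ->
  exists X, [/\ inG X, X u & distant X R].
Proof.
move=> GR nRu; have [X [GX uX dXR]] :=
  complement_inG_extension GR (line_subspace u) (line_disjoint GR.1 nRu).
by exists X; split=> //; apply/uX/line_id.
Qed.

Lemma complement_not_distant R A : inG R -> is_subspace A -> ~ sp_eq R A ->
  exists X, [/\ inG X, distant X R & ~ distant X A].
Proof.
move=> GR sA nRA.
have [[u [Au nRu]] | AR] := pselect (exists u, A u /\ ~ R u).
  have [X [GX Xu dXR]] := complement_through GR nRu.
  exists X; split=> // [[XA0 _]]; apply: nRu.
  by rewrite (XA0 u Xu Au); apply: (subspace0 GR.1).
have {}AR v : A v -> R v by move=> Av; apply: contrapT => nRv; apply: AR; exists v.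
have zero_R0 v : line 0 v -> R v -> v = 0 by move=> [a ->] _; rewrite scaler0.
have [X [GX _ dXR]] := complement_inG_extension GR (line_subspace 0) zero_R0.
exists X; split=> // dXA; apply: nRA => v; split; last exact: AR.
exact: (distant_subset GR.1 AR dXR dXA).
Qed.

Lemma separates_common_complement R P Q : inG R -> is_subspace Q ->
  ~ sp_eq R Q -> separates R P Q ->
  exists X, [/\ inG X, distant X R & distant X P].
Proof.
move=> GR sQ nRQ sepR.
have [X [GX dXR ndXQ]] := complement_not_distant GR sQ nRQ.
by exists X; split=> //; case: (sepR X GX dXR).
Qed.

Lemma common_complement_outside R A X : is_subspace R -> ~ sp_eq R A ->
  distant X R -> distant X A -> exists u, A u /\ ~ R u.
Proof.
move=> sR nRA dXR dXA; apply: contrapT => noU.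
have AR v : A v -> R v by move=> Av; apply: contrapT => nRv; apply: noU; exists v.
by apply: nRA => v; split; [exact: (distant_subset sR AR dXR dXA)|apply: AR].
Qed.

Lemma separatesC R P Q : separates R P Q -> separates R Q P.
Proof. by move=> sepR X GX dXR; rewrite or_comm; apply: sepR. Qed.

Section Separated.
Variables (P Q R X0 : V -> Prop) (u0 w0 : V).
Hypotheses (sP : is_subspace P) (sQ : is_subspace Q) (GR : inG R).
Hypothesis sepR : separates R P Q.
Hypotheses (Pu0 : P u0) (nRu0 : ~ R u0) (Qw0 : Q w0) (nRw0 : ~ R w0).
Hypotheses (sX0 : is_subspace X0) (dX0R : distant X0 R) (dX0P : distant X0 P).

Let sR : is_subspace R := GR.1.

Lemma separated_cap v : P v -> Q v -> R v.
Proof.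
move=> Pv Qv; apply: contrapT => nRv.
have [X [GX Xv dXR]] := complement_through GR nRv.
have v0 : v = 0.
  by case: (sepR GX dXR) => [[XP0 _]|[XQ0 _]]; [apply: XP0|apply: XQ0].
by apply: nRv; rewrite v0; apply: subspace0.
Qed.

Lemma separated_line_meets u w : P u -> ~ R u -> Q w -> ~ R w ->
  exists2 c, c != 0 & R (u + c *: w).
Proof.
move=> Pu nRu Qw nRw.
suff [c Ruc] : exists c, R (u + c *: w).
  exists c => //; apply: contra_notN nRu => /eqP c0.
  by move: Ruc; rewrite c0 scale0r addr0.
apply: contrapT => noc.
have uw_R0 v : sp_sum (line u) (line w) v -> R v -> v = 0.
  move=> [_ [_ [[a ->] [[b ->] ->]]]] Rv.
  have [a0 | a0] := eqVneq a 0.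
    move: Rv; rewrite a0 scale0r add0r.
    by apply: (line_disjoint sR nRw); exists b.
  case: noc; exists (a^-1 * b); apply: (subspaceZ_div sR a0).
  by rewrite scalerDr scalerA mulrA (mulrV (HK a0)) mul1r.
have s_uw := sp_sum_subspace (line_subspace u) (line_subspace w).
have [X [GX uwX dXR]] := complement_inG_extension GR s_uw uw_R0.
have Xu : X u by apply/uwX/sp_suml/line_id; apply: line_subspace.
have Xw : X w by apply/uwX/sp_sumr/line_id; apply: line_subspace.
case: (sepR GX dXR) => [[XP0 _]|[XQ0 _]].
  by apply: nRu; rewrite (XP0 u Xu Pu); apply: subspace0.
by apply: nRw; rewrite (XQ0 w Xw Qw); apply: subspace0.
Qed.

Lemma separated_P_sub u : P u -> sp_sum R (line u0) u.
Proof.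
move=> Pu; apply/sp_sum_lineP; have [Ru | nRu] := pselect (R u).
  by exists 0; rewrite scale0r subr0.
have [c _ Ruc] := separated_line_meets Pu nRu Qw0 nRw0.
have [c0 c00 Ruc0] := separated_line_meets Pu0 nRu0 Qw0 nRw0.
exists (c * c0^-1).
have -> : u - (c * c0^-1) *: u0 =
    (u + c *: w0) - (c * c0^-1) *: (u0 + c0 *: w0).
  by rewrite scalerDr scalerA (divrK (HK c00)) opprD addrACA subrr addr0.
by apply: subspaceB => //; apply: subspaceZ.
Qed.

Lemma separated_Q_sub w : Q w -> sp_sum R (line w0) w.
Proof.
move=> Qw; apply/sp_sum_lineP; have [Rw | nRw] := pselect (R w).
  by exists 0; rewrite scale0r subr0.
have [c c_neq0 Rwc] := separated_line_meets Pu0 nRu0 Qw nRw.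
have [c0 _ Rwc0] := separated_line_meets Pu0 nRu0 Qw0 nRw0.
exists (c^-1 * c0).
have -> : w - (c^-1 * c0) *: w0 =
    c^-1 *: ((u0 + c *: w) - (u0 + c0 *: w0)).
  by rewrite opprD addrACA subrr add0r scalerBr divring_scalerK // scalerA.
by apply: subspaceZ => //; apply: subspaceB.
Qed.

Lemma separated_R_sub y r : R y -> ~ P y -> R r -> sp_sum P (line y) r.
Proof.
move=> Ry nPy Rr; have [X0R0 _] := dX0R; have [_ X0P] := dX0P.
have [x1 [p1 [Xx1 [Pp1 rE]]]] := X0P r.
have [x2 [p2 [Xx2 [Pp2 yE]]]] := X0P y.
have /sp_sum_lineP [k1 Rp1] := separated_P_sub Pp1.
have /sp_sum_lineP [k2 Rp2] := separated_P_sub Pp2.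
have R1 : R (x1 + k1 *: u0).
  have -> : x1 + k1 *: u0 = r - (p1 - k1 *: u0).
    by rewrite rE opprB addrA addrAC addrK.
  exact: (subspaceB sR).
have R2 : R (x2 + k2 *: u0).
  have -> : x2 + k2 *: u0 = y - (p2 - k2 *: u0).
    by rewrite yE opprB addrA addrAC addrK.
  exact: (subspaceB sR).
have k20 : k2 != 0.
  apply: contra_notN nPy => /eqP k20; move: R2; rewrite k20 scale0r addr0 => Rx2.
  by rewrite yE (X0R0 x2 Xx2 Rx2) add0r.
apply/sp_sum_lineP; exists (k1 * k2^-1).
have x1E : x1 = (k1 * k2^-1) *: x2.
  apply/eqP; rewrite -subr_eq0; apply/eqP; apply: X0R0.
    by apply: subspaceB => //; apply: subspaceZ.
  have -> : x1 - (k1 * k2^-1) *: x2 =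
      (x1 + k1 *: u0) - (k1 * k2^-1) *: (x2 + k2 *: u0).
    by rewrite scalerDr scalerA (divrK (HK k20)) opprD addrACA subrr addr0.
  by apply: subspaceB => //; apply: subspaceZ.
rewrite rE yE x1E scalerDr opprD addrACA subrr add0r.
by apply: subspaceB => //; apply: subspaceZ.
Qed.

Lemma separated_QR_sub y : Q y -> R y -> P y.
Proof.
move=> Qy Ry; apply: contrapT => nPy.
have [c0 c00 Ruc0] := separated_line_meets Pu0 nRu0 Qw0 nRw0.
have /sp_sum_lineP [k Pk] := separated_R_sub Ry nPy Ruc0.
have Pt : P (c0 *: w0 - k *: y).
  by move: (subspaceB sP Pk Pu0); rewrite addrAC [u0 + _]addrC addrK.
have Qt : Q (c0 *: w0 - k *: y) by apply: subspaceB => //; apply: subspaceZ.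
apply: nRw0; apply: (subspaceZ_div sR c00); rewrite -(subrK (k *: y) (c0 *: w0)).
by apply: (subspaceD sR); [exact: (separated_cap Pt Qt)|apply: subspaceZ].
Qed.

Lemma separated_codim1 : codim1_in_sum P Q.
Proof.
exists w0; split; first exact: sp_sumr.
split=> [Pw0|_ [x [y [Px [Qy ->]]]]].
  exact: (nRw0 (separated_cap Pw0 Qw0)).
have /sp_sum_lineP [k Ryk] := separated_Q_sub Qy.
exists k; rewrite -addrA; apply: subspaceD => //; apply: (separated_QR_sub _ Ryk).
by apply: subspaceB => //; apply: subspaceZ.
Qed.

End Separated.

Lemma separated_codim1_in_sum P Q R : inG P -> inG Q -> inG R ->
  ~ sp_eq R P -> ~ sp_eq R Q -> separates R P Q -> codim1_in_sum P Q.
Proof.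
move=> [sP _] [sQ _] GR nRP nRQ sepR.
have [X [GX dXR dXP]] := separates_common_complement GR sQ nRQ sepR.
have [Y [_ dYR dYQ]] := separates_common_complement GR sP nRP (separatesC sepR).
have [u0 [Pu0 nRu0]] := common_complement_outside GR.1 nRP dXR dXP.
have [w0 [Qw0 nRw0]] := common_complement_outside GR.1 nRQ dYR dYQ.
exact: (separated_codim1 sP sQ GR sepR Pu0 nRu0 Qw0 nRw0 GX.1 dXR dXP).
Qed.

End DivisionRing.
End Subspaces.

Theorem theorem3p1 (K : unitRingType) (V : lmodType K)
  (HK : is_division_ring K)
  (HG : exists X : V -> Prop, inG X) :
  forall P Q : V -> Prop, inG P -> inG Q ->
    (adjacent P Q <->
     exists R : V -> Prop, inG R /\ ~ sp_eq R P /\ ~ sp_eq R Q /\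
       forall X : V -> Prop, inG X ->
         distant X R -> distant X P \/ distant X Q).
Proof.
move=> P Q GP GQ; split=> [adjPQ|[R [GR [nRP [nRQ sepR]]]]].
  by have [R [GR nRP nRQ sepR]] := adjacent_separated HK GP GQ adjPQ; exists R.
split; first exact: (separated_codim1_in_sum HK GP GQ GR nRP nRQ sepR).
exact: (separated_codim1_in_sum HK GQ GP GR nRQ nRP (separatesC sepR)).
Qed.
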